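(* Let $k$ be an infinite field and $n>0$ an integer. Then the action of $\mathrm{SO}_{2n+1}(k)$ on $\mathrm{Q}_{2n}(k)$ described in the context is transitive.
   Context: $\mathrm{Q}_{2n}$ is realized as the closed subscheme of $\mathbb{A}^{2n+2}_k$ given by $q_{2n+2}=0$ and $t_{2n+2}=1$, where $q_{2n+2}=\sum_{i=1}^{n+1}x_ix_{n+1+i}$, $t_{2n+2}(x)=x_{n+1}+x_{2n+2}=B(x,1)$ with $B$ the polar bilinear form of $q_{2n+2}$ and $1$ the vector with $x_{n+1}=x_{2n+2}=1$, other coordinates $0$ (this scheme is isomorphic to the hypersurface $\sum_{i=1}^nx_ix_{n+i}=x_{2n+1}(1-x_{2n+1})$ in $\mathbb{A}^{2n+1}_k$). The group $\mathrm{SO}_{2n+1}$ (kernel of the determinant on the orthogonal group scheme $\mathrm{O}_{2n+1}$ of $q_{2n+1}=\sum_{i=1}^nx_ix_{n+i}+x_{2n+1}^2$) acts on $\mathbb{A}^{2n+2}_k$ via the identification of $\mathrm{O}_{2n+1}$ with the stabilizer of $1$ in $\mathrm{GSO}_{2n+2}$ (the subgroup of similitudes of $q_{2n+2}$ generated by scalars and $\mathrm{SO}_{2n+2}$), using the embedding $(x_1,\dots,x_{2n+1})\mapsto(x_1,\dots,x_n,x_{2n+1},x_{n+1},\dots,x_{2n},x_{2n+1})$; this action preserves $q_{2n+2}$ and $t_{2n+2}$, hence $\mathrm{Q}_{2n}$. *)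

From HB Require Import structures.
From mathcomp Require Import all_boot all_order all_algebra.
Set Implicit Arguments. Unset Strict Implicit. Unset Printing Implicit Defensive.
Import Order.TTheory GRing.Theory Num.Theory.
Local Open Scope ring_scope.

(* Coordinates x_1..x_{2n+2} of A^{2n+2} are indexed by 'I_(n.+1 + n.+1):
   x_i (1 <= i <= n+1)  is  x (lshift _ (i-1)),
   x_{n+1+i}            is  x (rshift _ (i-1)). *)
Definition vec (k : fieldType) (n : nat) := 'cV[k]_(n.+1 + n.+1).

Definition q2 (k : fieldType) (n : nat) (x : vec k n) : k :=
  \sum_(i < n.+1) x (lshift n.+1 i) 0 * x (rshift n.+1 i) 0.

Definition t2 (k : fieldType) (n : nat) (x : vec k n) : k :=
  x (lshift n.+1 ord_max) 0 + x (rshift n.+1 ord_max) 0.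

Definition one_vec (k : fieldType) (n : nat) : vec k n :=
  \col_i (if (i == lshift n.+1 ord_max) || (i == rshift n.+1 ord_max)
          then 1 else 0).

Definition Q2n (k : fieldType) (n : nat) (x : vec k n) : Prop :=
  q2 x = 0 /\ t2 x = 1.

(* k-points of SO_{2n+2}: isometries of q_{2n+2} with trivial Dickson
   invariant, i.e. rank(A - 1) even (this agrees with det A = 1 when
   char k <> 2 and is the correct definition in every characteristic). *)
Definition SO2 (k : fieldType) (n : nat) (A : 'M[k]_(n.+1 + n.+1)) : Prop :=
  (forall v : vec k n, q2 (A *m v) = q2 v) /\ ~~ odd (\rank (A - 1%:M)).

Definition GSO2 (k : fieldType) (n : nat) (g : 'M[k]_(n.+1 + n.+1)) : Prop :=
  exists (c : k) (A : 'M[k]_(n.+1 + n.+1)), c != 0 /\ SO2 A /\ g = c *: A.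

(* The image of SO_{2n+1}(k) in GL_{2n+2}(k): the stabilizer of 1 in GSO_{2n+2}(k). *)
Definition SO_odd_image (k : fieldType) (n : nat) (g : 'M[k]_(n.+1 + n.+1)) : Prop :=
  GSO2 g /\ g *m one_vec k n = one_vec k n.

Definition infinite_field (k : fieldType) : Prop :=
  forall s : seq k, exists x : k, x \notin s.

From mathcomp Require Import all_boot all_order all_algebra.
From mathcomp Require Import ring.
Set Implicit Arguments. Unset Strict Implicit. Unset Printing Implicit Defensive.
Import Order.TTheory GRing.Theory Num.Theory.
Local Open Scope ring_scope.

(* Reflections s_v(w) = w - (B(w, v) / q(v)) v in anisotropic vectors v are
   isometries of q = q_{2n+2}, and they fix 1 when t(v) = B(1, v) = 0.  If x and
   z are isotropic with B(z, x) <> 0, then q(z - x) = -B(z, x) <> 0 and s_{z-x}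
   sends x to z.  Over an infinite field a point z of Q_{2n} with B(z, x) and
   B(z, y) both nonzero exists, so s_{y-z} s_{z-x} maps x to y and fixes 1.  A
   product of two reflections lies in SO_{2n+2}: g - 1 has rank 2 when the two
   vectors are independent, and g = 1 when they are proportional. *)

Definition free_pair (R : nzRingType) (M : lmodType R) (u v : M) : Prop :=
  forall a b : R, a *: u + b *: v = 0 -> a = 0 /\ b = 0.

Section LinearAlgebra.
Variable F : fieldType.

Lemma affine_neq0 (c0 c1 l : F) :
  (c0 != 0) || (c1 != 0) -> l != - c0 / c1 -> c0 + c1 * l != 0.
Proof.
have [->|c1_neq0] := eqVneq c1 0; first by rewrite mul0r addr0 orbF.
move=> _; apply: contra => /eqP sum0; apply/eqP.
by rewrite -[c0](addrK (c1 * l)) sum0 sub0r opprK [c1 * l]mulrC mulfK.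
Qed.

Lemma mulmx_cVP m n (A B : 'M[F]_(m, n)) :
  (forall v : 'cV_n, A *m v = B *m v) -> A = B.
Proof.
move=> eqAB; apply/matrixP => i j.
by move/(_ (delta_mx j 0))/matrixP/(_ i 0): eqAB; rewrite -!colE !mxE.
Qed.

Lemma row_free_col_mx_pair m (u v : 'rV[F]_m) :
  free_pair u v -> row_free (col_mx u v : 'M_(1 + 1, m)).
Proof.
move=> uv_free; rewrite -kermx_eq0; apply/eqP/row_matrixP => i; rewrite row0.
set r := row i _.
have : r *m col_mx u v = 0 by rewrite /r -row_mul mulmx_ker row0.
rewrite -[r]hsubmxK mul_row_col (mx11_scalar (lsubmx r)) (mx11_scalar (rsubmx r)).
by rewrite !mul_scalar_mx => /uv_free [-> ->]; rewrite raddf0 row_mx0.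
Qed.

Lemma free_pair_trmx m n (u v : 'M[F]_(m, n)) :
  free_pair u v -> free_pair u^T v^T.
Proof.
move=> uv_free a b abuv; apply: uv_free; apply: trmx_inj.
by rewrite linearD !linearZ /= abuv trmx0.
Qed.

Lemma colinear_or_free_pair m (u v : 'cV[F]_m) :
  v != 0 -> (exists c, u = c *: v) \/ free_pair u v.
Proof.
move=> v_neq0; have [/sub_rVP [c uvT] | u_notin_v] := boolP (u^T <= v^T)%MS.
  by left; exists c; apply: trmx_inj; rewrite uvT linearZ.
right=> a b abuv; have a0 : a = 0.
  apply/eqP; apply: contraNT u_notin_v => a_neq0; apply/sub_rVP.
  exists (- (b / a)); rewrite -linearZ /=; congr (_^T).
  apply: (scalerI a_neq0); rewrite scalerA mulrN mulrCA divff // mulr1.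
  by apply/eqP; rewrite scaleNr -subr_eq0 opprK abuv.
move: abuv; rewrite a0 scale0r add0r => /eqP; rewrite scalemx_eq0 (negbTE v_neq0).
by rewrite orbF => /eqP.
Qed.

End LinearAlgebra.

Section QuadraticForm.
Variables (k : fieldType) (n : nat).
Notation V := (vec k n).

Definition lcoord (u : V) (i : 'I_n.+1) : k := u (lshift n.+1 i) 0.
Definition rcoord (u : V) (i : 'I_n.+1) : k := u (rshift n.+1 i) 0.

Definition polar2 (u v : V) : k :=
  \sum_(i < n.+1) (lcoord u i * rcoord v i + lcoord v i * rcoord u i).

Lemma q2E (u : V) : q2 u = \sum_i lcoord u i * rcoord u i.
Proof. by []. Qed.

Lemma lcoord_comb (a b : k) (u v : V) i :
  lcoord (a *: u + b *: v) i = a * lcoord u i + b * lcoord v i.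
Proof. by rewrite /lcoord !mxE. Qed.

Lemma rcoord_comb (a b : k) (u v : V) i :
  rcoord (a *: u + b *: v) i = a * rcoord u i + b * rcoord v i.
Proof. by rewrite /rcoord !mxE. Qed.

Lemma q2_comb (a b : k) (u v : V) :
  q2 (a *: u + b *: v) = a ^+ 2 * q2 u + b ^+ 2 * q2 v + a * b * polar2 u v.
Proof.
rewrite !q2E /polar2 !mulr_sumr -!big_split /=; apply: eq_bigr => i _.
by rewrite lcoord_comb rcoord_comb; ring.
Qed.

Lemma polar2_combl (a b : k) (u v w : V) :
  polar2 (a *: u + b *: v) w = a * polar2 u w + b * polar2 v w.
Proof.
rewrite /polar2 !mulr_sumr -!big_split /=; apply: eq_bigr => i _.
by rewrite lcoord_comb rcoord_comb; ring.
Qed.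

Lemma polar2C (u v : V) : polar2 u v = polar2 v u.
Proof. by apply: eq_bigr => i _; rewrite addrC. Qed.

Lemma polar2_diag (u : V) : polar2 u u = 2 * q2 u.
Proof. by rewrite q2E /polar2 mulr_sumr; apply: eq_bigr => i _; ring. Qed.

Lemma q2_sub_isotropic (u v : V) :
  q2 u = 0 -> q2 v = 0 -> q2 (v - u) = - polar2 v u.
Proof.
move=> qu0 qv0; have -> : v - u = 1 *: v + (-1) *: u by rewrite scale1r scaleN1r.
by rewrite q2_comb qu0 qv0; ring.
Qed.

Lemma t2B (u v : V) : t2 (u - v) = t2 u - t2 v.
Proof. by rewrite /t2 !mxE opprD addrACA. Qed.

Lemma polar2_one_vec (v : V) : polar2 (one_vec k n) v = t2 v.
Proof.
rewrite /polar2 (bigD1 ord_max) //= big1 => [|i i_neq_max].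
  rewrite /lcoord /rcoord /t2 !mxE !eq_lshift !eq_rshift eq_lrshift eq_rlshift.
  by rewrite eqxx /= mul1r mulr1 addr0 addrC.
rewrite /lcoord /rcoord !mxE !eq_lshift !eq_rshift eq_lrshift eq_rlshift.
by rewrite (negbTE i_neq_max) /= mul0r mulr0 addr0.
Qed.

Definition polar_dual (v : V) : 'rV[k]_(n.+1 + n.+1) :=
  (col_mx (dsubmx v) (usubmx v))^T.

Definition refl_coef (v : V) : 'rV[k]_(n.+1 + n.+1) :=
  (q2 v)^-1 *: polar_dual v.

Definition refl (v : V) : 'M[k]_(n.+1 + n.+1) := 1%:M - v *m refl_coef v.

Lemma polar_dualE (v w : V) : (polar_dual v *m w) 0 0 = polar2 w v.
Proof.
rewrite !mxE big_split_ord /polar2 big_split /=.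
by congr (_ + _); apply: eq_bigr => i _;
  rewrite [polar_dual v _ _]mxE ?col_mxEu ?col_mxEd mxE mulrC.
Qed.

Lemma polar_dual_comb (a b : k) (u v : V) :
  polar_dual (a *: u + b *: v) = a *: polar_dual u + b *: polar_dual v.
Proof.
rewrite /polar_dual -!linearZ -linearD /=; congr (_^T).
by rewrite !linearD !linearZ /= !scale_col_mx add_col_mx.
Qed.

Lemma polar_dual_eq0 (v : V) : polar_dual v = 0 -> v = 0.
Proof.
move/(congr1 trmx); rewrite trmxK trmx0 => /eqP; rewrite col_mx_eq0.
by case/andP=> /eqP d0 /eqP u0; rewrite -[v]vsubmxK d0 u0 col_mx0.
Qed.

Lemma q2Z (c : k) (u : V) : q2 (c *: u) = c ^+ 2 * q2 u.
Proof.
rewrite !q2E mulr_sumr; apply: eq_bigr => i _.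
by rewrite /lcoord /rcoord !mxE; ring.
Qed.

Lemma polar2Zr (c : k) (u v : V) : polar2 u (c *: v) = c * polar2 u v.
Proof.
rewrite /polar2 mulr_sumr; apply: eq_bigr => i _.
by rewrite /lcoord /rcoord !mxE; ring.
Qed.

Lemma refl_mulmx (v w : V) : refl v *m w = w - (polar2 w v / q2 v) *: v.
Proof.
rewrite /refl /refl_coef mulmxBl mul1mx -mulmxA -scalemxAl.
rewrite [polar_dual v *m w]mx11_scalar polar_dualE -scalemxAr mul_mx_scalar.
by rewrite scalerA mulrC.
Qed.

Lemma refl_fix (v w : V) : polar2 w v = 0 -> refl v *m w = w.
Proof. by move=> wv0; rewrite refl_mulmx wv0 mul0r scale0r subr0. Qed.

Lemma refl_isometry (v w : V) : q2 v != 0 -> q2 (refl v *m w) = q2 w.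
Proof.
move=> qv_neq0; rewrite refl_mulmx -scaleNr -[w in w + _]scale1r q2_comb.
by rewrite polar2C; field.
Qed.

Lemma refl_involutive (v : V) : q2 v != 0 -> refl v *m refl v = 1%:M.
Proof.
move=> qv_neq0; apply: mulmx_cVP => w; rewrite -mulmxA mul1mx !refl_mulmx.
set t := polar2 w v / q2 v.
have -> : polar2 (w - t *: v) v = - polar2 w v.
  rewrite -scaleNr -[w in polar2 (w + _)]scale1r polar2_combl polar2_diag /t.
  by field.
by rewrite mulNr scaleNr opprK subrK.
Qed.

Lemma reflZ (c : k) (v : V) : c != 0 -> refl (c *: v) = refl v.
Proof.
move=> c_neq0; apply: mulmx_cVP => w; rewrite !refl_mulmx q2Z polar2Zr scalerA.
congr (_ - _ *: _); rewrite invfM; set qi := (q2 v)^-1; by field.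
Qed.

Lemma refl_swap (x z : V) :
  q2 x = 0 -> q2 z = 0 -> polar2 z x != 0 -> refl (z - x) *m x = z.
Proof.
move=> qx0 qz0 zx_neq0; rewrite refl_mulmx q2_sub_isotropic //.
have -> : polar2 x (z - x) = polar2 z x.
  rewrite polar2C (_ : z - x = 1 *: z + (-1) *: x); last by rewrite scale1r scaleN1r.
  by rewrite polar2_combl polar2_diag qx0; ring.
by rewrite invrN mulrN divff // scaleN1r opprK addrC subrK.
Qed.

Lemma free_pair_refl_coef (a b : V) : q2 a != 0 -> q2 b != 0 ->
  free_pair a b -> free_pair (refl_coef a) (refl_coef b).
Proof.
move=> qa_neq0 qb_neq0 ab_free g d.
rewrite /refl_coef !scalerA -polar_dual_comb => /polar_dual_eq0 /ab_free [].
by move=> /eqP; rewrite mulf_eq0 invr_eq0 (negbTE qa_neq0) orbF => /eqP ->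
   /eqP; rewrite mulf_eq0 invr_eq0 (negbTE qb_neq0) orbF => /eqP ->.
Qed.

Lemma reflM_sub1 (a b : V) : refl a *m refl b - 1%:M =
  row_mx a b *m col_mx ((refl_coef a *m b) 0 0 *: refl_coef b - refl_coef a)
                       (- refl_coef b).
Proof.
rewrite mul_row_col /refl mulmxBl mulmxBr !mul1mx mulmxBr mulmx1.
have -> : a *m refl_coef a *m (b *m refl_coef b) =
          a *m ((refl_coef a *m b) 0 0 *: refl_coef b).
  by rewrite -mul_scalar_mx -mx11_scalar !mulmxA.
rewrite mulmxBr mulmxN.
(* Rewriting directly in the matrix ring fails to unify; use an abstract zmodType. *)
have regroup (M : zmodType) (o y x w : M) : o - y - (x - w) - o = w - x - y.
  by rewrite addrAC [o - y - o]addrAC subrr add0r opprB addrC.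
exact: regroup.
Qed.

Lemma rank_reflM_sub1 (a b : V) : q2 a != 0 -> q2 b != 0 ->
  free_pair a b -> \rank (refl a *m refl b - 1%:M) = 2%N.
Proof.
move=> qa_neq0 qb_neq0 ab_free; rewrite reflM_sub1 mxrankMfree.
  rewrite -mxrank_tr tr_row_mx; apply/eqP; apply: row_free_col_mx_pair.
  exact: free_pair_trmx.
apply: row_free_col_mx_pair => g d.
set ra := refl_coef a; set rb := refl_coef b; set mu := (ra *m b) 0 0.
have -> : g *: (mu *: rb - ra) + d *: - rb = (- g) *: ra + (g * mu - d) *: rb.
  by rewrite scalerBr scalerA scaleNr scalerBl scalerN addrAC addrC.
move/(free_pair_refl_coef qa_neq0 qb_neq0 ab_free) => [/eqP].
rewrite oppr_eq0 => /eqP g0; rewrite g0 mul0r sub0r => /eqP.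
by rewrite oppr_eq0 => /eqP.
Qed.

Lemma SO2_reflM (a b : V) : q2 a != 0 -> q2 b != 0 -> SO2 (refl a *m refl b).
Proof.
move=> qa_neq0 qb_neq0; split=> [w|]; first by rewrite -mulmxA !refl_isometry.
have b_neq0 : b != 0.
  by apply: contraNneq qb_neq0 => ->; rewrite -(scale0r b) q2Z expr2 !mul0r.
have [[c a_cb]|ab_free] := colinear_or_free_pair a b_neq0.
  have c_neq0 : c != 0.
    by apply: contraNneq qa_neq0 => c0; rewrite a_cb c0 q2Z expr2 !mul0r.
  by rewrite a_cb reflZ // refl_involutive // subrr mxrank0.
by rewrite rank_reflM_sub1.
Qed.

Section QuadricPoints.
Hypothesis n_gt0 : (0 < n)%N.
Variable kappa : k.
Hypothesis kappa_neq0 : kappa != 0.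

Let i0 : 'I_n.+1 := ord0.
Let im : 'I_n.+1 := ord_max.

Lemma i0_neq_im : i0 != im.
Proof. by rewrite -val_eqE /= eq_sym -lt0n. Qed.

(* Supported on x_1, x_{n+1}, x_{n+2}, x_{2n+2}; x_1 x_{n+2} = - x_{n+1} x_{2n+2}. *)
Definition qpoint (lambda : k) : V :=
  col_mx
    (\col_i (if i == im then lambda else if i == i0 then kappa * lambda else 0))
    (\col_i (if i == im then 1 - lambda
             else if i == i0 then (lambda - 1) / kappa else 0)).

Lemma qpoint_coord lambda i : i != i0 -> i != im ->
  lcoord (qpoint lambda) i = 0 /\ rcoord (qpoint lambda) i = 0.
Proof.
move=> /negbTE i_neq0 /negbTE i_neqm.
by rewrite /lcoord /rcoord !col_mxEu !col_mxEd !mxE i_neq0 i_neqm.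
Qed.

Lemma sum_i0_im (F : 'I_n.+1 -> k) :
  (forall i, i != i0 -> i != im -> F i = 0) -> \sum_i F i = F i0 + F im.
Proof.
move=> F0; rewrite (bigD1 i0) //= (bigD1 im) /=; last by rewrite eq_sym i0_neq_im.
by rewrite big1 ?addr0 // => i /andP [] /F0.
Qed.

Lemma qpoint_Q2n lambda : Q2n (qpoint lambda).
Proof.
split; last by rewrite /t2 !col_mxEu !col_mxEd !mxE eqxx addrC subrK.
rewrite q2E sum_i0_im => [|i i_neq0 i_neqm]; last first.
  by have [-> _] := qpoint_coord lambda i_neq0 i_neqm; rewrite mul0r.
by rewrite /lcoord /rcoord !col_mxEu !col_mxEd !mxE !eqxx (negbTE i0_neq_im); field.
Qed.

Definition qpoint_coef0 (x : V) : k := lcoord x im - lcoord x i0 / kappa.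
Definition qpoint_coef1 (x : V) : k :=
  kappa * rcoord x i0 + lcoord x i0 / kappa + rcoord x im - lcoord x im.

Lemma polar2_qpoint lambda (x : V) :
  polar2 (qpoint lambda) x = qpoint_coef0 x + qpoint_coef1 x * lambda.
Proof.
rewrite /polar2 sum_i0_im => [|i i_neq0 i_neqm]; last first.
  by have [-> ->] := qpoint_coord lambda i_neq0 i_neqm; rewrite mul0r mulr0 addr0.
rewrite /qpoint_coef0 /qpoint_coef1 /lcoord /rcoord !col_mxEu !col_mxEd !mxE !eqxx.
by rewrite (negbTE i0_neq_im); field.
Qed.

(* If x_{n+1} = 0 the first entry is the junk value x_1 / 0 = 0, already excluded. *)
Definition bad_kappas (x : V) : seq k :=
  [:: lcoord x i0 / lcoord x im; - (rcoord x i0)^-1].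

Lemma qpoint_coef_neq0 (x : V) : t2 x = 1 -> kappa \notin bad_kappas x ->
  (qpoint_coef0 x != 0) || (qpoint_coef1 x != 0).
Proof.
move=> tx1; rewrite !inE negb_or -negb_and.
move=> /andP [/eqP kappa_neq_l /eqP kappa_neq_r].
apply/negP => /andP [/eqP c0 /eqP c1].
have l0 : lcoord x i0 = kappa * lcoord x im.
  by move/eqP: c0; rewrite subr_eq0 => /eqP ->; field.
have r0 : kappa * rcoord x i0 + rcoord x im = 0.
  by rewrite -(addr0 0) -{1}c0 -c1 /qpoint_coef0 /qpoint_coef1; ring.
have tm : lcoord x im + rcoord x im = 1 by [].
have [lm0 | lm_neq0] := eqVneq (lcoord x im) 0.
  have kr0 : kappa * rcoord x i0 = -1.
    by rewrite -[LHS]subr0 -r0 -tm lm0; ring.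
  have r_neq0 : rcoord x i0 != 0.
    by apply: contra_eq_neq kr0 => ->; rewrite mulr0 eq_sym oppr_eq0 oner_eq0.
  by apply: kappa_neq_r; rewrite -mulN1r -kr0 mulfK.
by apply: kappa_neq_l; rewrite l0 mulfK.
Qed.

End QuadricPoints.

Lemma exists_Q2n_nonorthogonal (s : seq V) : (0 < n)%N -> infinite_field k ->
  {in s, forall x, t2 x = 1} -> exists z, Q2n z /\ {in s, forall x, polar2 z x != 0}.
Proof.
move=> n_gt0 k_inf s_t2.
have [kappa] := k_inf (0 :: flatten (map bad_kappas s)).
rewrite inE negb_or => /andP [kappa_neq0 kappa_good].
have [lambda lambda_good] :=
  k_inf [seq - qpoint_coef0 kappa x / qpoint_coef1 kappa x | x <- s].
exists (qpoint kappa lambda); split=> [|x xs]; first exact: qpoint_Q2n.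
rewrite polar2_qpoint //; apply: affine_neq0.
  apply: qpoint_coef_neq0 => //; first exact: s_t2.
  apply: contra kappa_good => bad; apply/flattenP.
  by exists (bad_kappas x); rewrite ?map_f.
by apply: contra lambda_good => /eqP ->; exact: map_f.
Qed.

End QuadraticForm.

Theorem proposition2p10 (k : fieldType) (n : nat) :
  infinite_field k -> (0 < n)%N ->
  forall x y : vec k n, Q2n x -> Q2n y ->
  exists g : 'M[k]_(n.+1 + n.+1), SO_odd_image g /\ g *m x = y.
Proof.
move=> k_inf n_gt0 x y [qx0 tx1] [qy0 ty1].
have [z [[qz0 tz1] z_nonorth]] :
    exists z, Q2n z /\ {in [:: x; y], forall w, polar2 z w != 0}.
  by apply: exists_Q2n_nonorthogonal => // w; rewrite !inE => /orP [] /eqP ->.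
have zx_neq0 := z_nonorth x (mem_head _ _).
have zy_neq0 : polar2 y z != 0 by rewrite polar2C z_nonorth // !inE eqxx orbT.
have q_neq0 (u v : vec k n) :
    q2 u = 0 -> q2 v = 0 -> polar2 v u != 0 -> q2 (v - u) != 0.
  by move=> qu0 qv0; rewrite q2_sub_isotropic // oppr_eq0.
exists (refl (y - z) *m refl (z - x)); split; first split.
- exists 1, (refl (y - z) *m refl (z - x)); rewrite scale1r oner_neq0.
  by split=> //; split=> //; apply: SO2_reflM; apply: q_neq0.
- by rewrite -mulmxA !refl_fix // polar2_one_vec t2B ?tx1 ?ty1 tz1 subrr.
- by rewrite -mulmxA !refl_swap.
Qed.
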